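(* Let $S=\mathbb{Q}[x,y]/\langle x^3+xy^2+y^3\rangle$, and let $A_1=\mathbb{Q}[x^2,xy]$ and $A_2=\mathbb{Q}[x,y^2]$ be the subalgebras of $S$ generated by the images of the indicated polynomials. Then $$A_1\cap A_2=\mathbb{Q}[\,x^2,\; x^2y^2+xy^3,\; y^4,\; xy^3,\; y^6,\; xy^5\,]\subseteq S,$$ and these six elements form a subalgebra basis of $A_1\cap A_2$ with respect to the graded reverse lexicographic order with $x>y$.
   Context: For an ideal $I$ of a polynomial ring $R$ with monomial order $<$ and a subalgebra $A\subseteq R/I$, the initial algebra $\operatorname{in}_<(A)$ is the subalgebra of $R/\operatorname{in}_<(I)$ generated by the initial terms (taken with respect to normal forms modulo $I$) of elements of $A$; a set $\{g_j\}\subseteq A$ is a subalgebra basis of $A$ if $\operatorname{in}_<(A)$ is generated by the initial terms of the $g_j$. Here $\operatorname{in}_<(I)=\langle x^3\rangle$. *)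

(* Q[x,y] is represented as {poly {poly rat}}:
   the outer variable is x, the inner one (coefficients) is y. *)
From mathcomp Require Import all_boot all_order all_algebra.
Set Implicit Arguments. Unset Strict Implicit. Unset Printing Implicit Defensive.
Import GRing.Theory.
Local Open Scope ring_scope.

Definition Rxy : Type := {poly {poly rat}}.
Definition X : Rxy := 'X.
Definition Y : Rxy := ('X)%:P.
Definition cst (c : rat) : Rxy := c%:P%:P.

Inductive subalg_gen (G : Rxy -> Prop) : Rxy -> Prop :=
  | sg_cst c : subalg_gen G (cst c)
  | sg_gen g : G g -> subalg_gen G g
  | sg_add p q : subalg_gen G p -> subalg_gen G q -> subalg_gen G (p + q)
  | sg_mul p q : subalg_gen G p -> subalg_gen G q -> subalg_gen G (p * q).

Definition in_ideal (f p : Rxy) : Prop := exists h : Rxy, p = h * f.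

(* p (a representative of its class in Rxy/<f>) lies in the subalgebra of
   Rxy/<f> generated by the images of G. *)
Definition subalg_mod (f : Rxy) (G : Rxy -> Prop) (p : Rxy) : Prop :=
  exists q, subalg_gen G q /\ in_ideal f (p - q).

Definition of_seq (gs : seq Rxy) : Rxy -> Prop := fun g => g \in gs.

Definition fS : Rxy := X ^+ 3 + X * Y ^+ 2 + Y ^+ 3.
(* Its initial ideal for grevlex (x > y): in(I) = <x^3>. *)
Definition inI : Rxy := X ^+ 3.

Definition grevlex_le (i j i' j' : nat) : bool :=
  (i + j < i' + j')%N || ((i + j == i' + j')%N && (j' <= j)%N).

Definition coef2 (r : Rxy) (i j : nat) : rat := (r`_i)`_j.

Definition term (c : rat) (i j : nat) : Rxy := (c *: 'X^j)%:P * 'X^i.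

Definition is_init_term (r t : Rxy) : Prop :=
  exists i j, coef2 r i j != 0 /\ t = term (coef2 r i j) i j /\
    forall i' j', coef2 r i' j' != 0 -> grevlex_le i' j' i j.

(* r is the normal form of p modulo I = <fS>: p - r in I and no monomial of
   r lies in in(I) = <x^3>, i.e. r has x-degree < 3. *)
Definition is_NF (p r : Rxy) : Prop := in_ideal fS (p - r) /\ (size r <= 3)%N.

Definition init_term (p t : Rxy) : Prop := exists r, is_NF p r /\ is_init_term r t.

(* in_<(A): subalgebra of Rxy/in(I) generated by the initial terms of
   elements of A (A given as a predicate on representatives). *)
Definition initial_algebra (A : Rxy -> Prop) : Rxy -> Prop :=
  subalg_mod inI (fun t => exists a, A a /\ init_term a t).

Definition subalg_basis (A : Rxy -> Prop) (gs : seq Rxy) : Prop :=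
  (forall g, g \in gs -> A g) /\
  (forall t, initial_algebra A t <->
             subalg_mod inI (fun t => exists g, g \in gs /\ init_term g t) t).

Definition A1gens : seq Rxy := [:: X ^+ 2; X * Y].
Definition A2gens : seq Rxy := [:: X; Y ^+ 2].
Definition Bgens : seq Rxy :=
  [:: X ^+ 2; X ^+ 2 * Y ^+ 2 + X * Y ^+ 3; Y ^+ 4; X * Y ^+ 3; Y ^+ 6; X * Y ^+ 5].

Definition A1 : Rxy -> Prop := subalg_mod fS (of_seq A1gens).
Definition A2 : Rxy -> Prop := subalg_mod fS (of_seq A2gens).
Definition A12 : Rxy -> Prop := fun p => A1 p /\ A2 p.

From mathcomp Require Import all_boot all_order all_algebra.
From mathcomp Require Import ring zify.
Set Implicit Arguments. Unset Strict Implicit. Unset Printing Implicit Defensive.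
Import GRing.Theory.
Local Open Scope ring_scope.

(* Everything is read off exponents.  Elements of Q[x^2,xy] are supported on
   exponents (i,j) with i+j even and j <= i, elements of Q[x,y^2] on j even.
   As fS is homogeneous of degree 3, two representatives of one class agree
   in degree < 3; so an element of A1 /\ A2 has a representative supported on
   exps_B = {i+j even} minus {xy, y^2}.  Every exponent of exps_B is a sum of
   (2,0), (2,2), (3,1), (0,4), (1,3), (0,6), (1,5) (lemma exps_B_monos), and
   the corresponding monomials lie in B; conversely explicit certificates
   g = q + h fS put the generators of B in A1 and in A2.  This gives
   A1 /\ A2 = B.  For the subalgebra basis property, reduction modulo fS
   (x^3 -> -xy^2 - y^3) preserves exps_B, so by uniqueness of normal forms the
   initial term of any element of A1 /\ A2 is supported on exps_B; modulo
   x^3 the seven monomials above are generated by the initial terms of the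
   generators of B, so exps_B_monos applies once more. *)

Section PrincipalIdeal.
Variable f : Rxy.

Lemma ideal0 : in_ideal f 0.
Proof. by exists 0; rewrite mul0r. Qed.

Lemma idealD p q : in_ideal f p -> in_ideal f q -> in_ideal f (p + q).
Proof. by move=> [a ->] [b ->]; exists (a + b); rewrite mulrDl. Qed.

Lemma idealMl p q : in_ideal f p -> in_ideal f (q * p).
Proof. by move=> [a ->]; exists (q * a); rewrite mulrA. Qed.

End PrincipalIdeal.

Section SubalgebraModulo.
Variables (f : Rxy) (G : Rxy -> Prop).
Local Notation S := (subalg_mod f G).

Lemma sm_cst c : S (cst c).
Proof. by exists (cst c); split; [exact: sg_cst | rewrite subrr; exact: ideal0]. Qed.

Lemma sm_gen g : G g -> S g.
Proof. by exists g; split; [exact: sg_gen | rewrite subrr; exact: ideal0]. Qed.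

Lemma sm_add p q : S p -> S q -> S (p + q).
Proof.
move=> [a [Ha Hpa]] [b [Hb Hqb]]; exists (a + b); split; first exact: sg_add.
by rewrite (_ : _ - _ = (p - a) + (q - b)); [exact: idealD | ring].
Qed.

Lemma sm_mul p q : S p -> S q -> S (p * q).
Proof.
move=> [a [Ha Hpa]] [b [Hb Hqb]]; exists (a * b); split; first exact: sg_mul.
rewrite (_ : _ - _ = q * (p - a) + a * (q - b)); last by ring.
by apply: idealD; exact: idealMl.
Qed.

Lemma sm_opp p : S p -> S (- p).
Proof.
move=> Sp; rewrite (_ : - p = cst (-1) * p); first exact: sm_mul (sm_cst _) Sp.
by rewrite /cst !rmorphN1 mulN1r.
Qed.

Lemma sm_ideal p q : S q -> in_ideal f (p - q) -> S p.
Proof.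
move=> [a [Ha Hqa]] Hpq; exists a; split=> //.
by rewrite (_ : _ - _ = (p - q) + (q - a)); [exact: idealD | ring].
Qed.

Lemma sm_congr p q h : p = q + h * f -> S q -> S p.
Proof. by move=> Epq Sq; apply: sm_ideal Sq _; exists h; rewrite Epq; ring. Qed.

End SubalgebraModulo.

Lemma sm_sub f (G G' : Rxy -> Prop) p :
  (forall g, G g -> subalg_mod f G' g) -> subalg_mod f G p -> subalg_mod f G' p.
Proof.
move=> HG [q [Hq Hpq]]; apply: sm_ideal Hpq.
elim: Hq => {q} [c|g /HG //|a b _ Ha _ Hb|a b _ Ha _ Hb].
- exact: sm_cst.
- exact: sm_add.
- exact: sm_mul.
Qed.

Ltac subalg_closure :=
  repeat first
    [ assumption
    | apply: sm_gen; by rewrite /of_seq !inE eqxx ?orbT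
    | apply: sm_cst | apply: sm_opp | apply: sm_add | apply: sm_mul ].

Definition mono (i j : nat) : Rxy := X ^+ i * Y ^+ j.

Lemma monoE i j : mono i j = ('X^j)%:P * 'X^i.
Proof. by rewrite /mono /X /Y rmorphXn mulrC. Qed.

Lemma mono_split a b c d : mono (a + c) (b + d) = mono a b * mono c d.
Proof. rewrite /mono !exprD; ring. Qed.

Lemma mono0 : mono 0 0 = cst 1.
Proof. by rewrite /mono /cst !rmorph1 mulr1. Qed.

Lemma termE c i j : term c i j = cst c * mono i j.
Proof. by rewrite /term monoE /cst mulrA -polyCM (mul_polyC c). Qed.

Lemma coef2_mono a b i j : coef2 (mono a b) i j = ((i == a) && (j == b))%:R.
Proof.
rewrite /coef2 monoE coefCM coefXn.
by case: (i == a); rewrite ?mulr1 ?coefXn // mulr0 coef0.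
Qed.

Lemma coef2D p q i j : coef2 (p + q) i j = coef2 p i j + coef2 q i j.
Proof. by rewrite /coef2 !coefD. Qed.

Lemma coef2B p q i j : coef2 (p - q) i j = coef2 p i j - coef2 q i j.
Proof. by rewrite /coef2 !coefB. Qed.

Lemma coef2CM c p i j : coef2 (cst c * p) i j = c * coef2 p i j.
Proof. by rewrite /coef2 /cst !coefCM. Qed.

Lemma coef2M p q i j : coef2 (p * q) i j != 0 ->
  exists k l,
    [/\ (k <= i)%N, (l <= j)%N, coef2 p k l != 0 & coef2 q (i - k) (j - l) != 0].
Proof.
move=> Hnz.
have [/existsP [k /existsP [l /andP [Hp Hq]]]|] := boolP
  [exists k : 'I_i.+1, exists l : 'I_j.+1,
     (coef2 p k l != 0) && (coef2 q (i - k) (j - l) != 0)].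
  by exists k, l; split=> //; rewrite -ltnS ltn_ord.
rewrite negb_exists => /forallP Hall.
move: Hnz; rewrite /coef2 coefM coef_sum big1 ?eqxx // => k _.
rewrite coefM big1 // => l _.
move: (Hall k); rewrite negb_exists => /forallP /(_ l).
by rewrite negb_and !negbK /coef2 => /orP [] /eqP ->; rewrite ?mul0r ?mulr0.
Qed.

Definition supp_in (P : nat -> nat -> bool) (p : Rxy) : Prop :=
  forall i j, coef2 p i j != 0 -> P i j.

Section Support.
Variable P : nat -> nat -> bool.

Lemma supp0 : supp_in P 0.
Proof. by move=> i j; rewrite /coef2 !coef0 eqxx. Qed.

Lemma supp_add p q : supp_in P p -> supp_in P q -> supp_in P (p + q).
Proof.
move=> Hp Hq i j; rewrite coef2D.
by have [/eqP ->|/Hp //] := boolP (coef2 p i j == 0); rewrite add0r => /Hq.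
Qed.

Lemma supp_cstM c p : supp_in P p -> supp_in P (cst c * p).
Proof.
move=> Hp i j; rewrite coef2CM.
by have [/eqP ->|/Hp //] := boolP (coef2 p i j == 0); rewrite mulr0 eqxx.
Qed.

Lemma supp_mono a b : P a b -> supp_in P (mono a b).
Proof.
move=> Hab i j; rewrite coef2_mono.
by case: (boolP ((i == a) && (j == b))) => [/andP [/eqP -> /eqP ->]|]; rewrite ?eqxx.
Qed.

Lemma supp_cst c : P 0 0 -> supp_in P (cst c).
Proof.
move=> H00; rewrite (_ : cst c = cst c * mono 0 0); first exact/supp_cstM/supp_mono.
by rewrite mono0 /cst !rmorph1 mulr1.
Qed.

Lemma supp_ind (Q : Rxy -> Prop) p :
  Q 0 -> (forall a b, Q a -> Q b -> Q (a + b)) ->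
  (forall c i j, P i j -> Q (cst c * mono i j)) -> supp_in P p -> Q p.
Proof.
move=> Q0 QD Qterm Hp.
have -> : p = \sum_(i < size p) \sum_(j < size p`_i) cst (coef2 p i j) * mono i j.
  rewrite -{1}[p]coefK poly_def; apply: eq_bigr => i _.
  under eq_bigr do rewrite -termE /term.
  by rewrite -mulr_suml -rmorph_sum -poly_def coefK mul_polyC.
apply: big_ind => // i _; apply: big_ind => // j _.
have [/eqP ->|/Hp] := boolP (coef2 p i j == 0); last exact: Qterm.
by rewrite /cst !rmorph0 mul0r.
Qed.

Lemma sm_supp f G p : supp_in P p ->
  (forall i j, P i j -> subalg_mod f G (mono i j)) -> subalg_mod f G p.
Proof.
move=> Hp Hmono; apply: supp_ind Hp.
- by rewrite (_ : 0 = cst 0); [exact: sm_cst | rewrite /cst !rmorph0].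
- exact: sm_add.
- by move=> c i j /Hmono; apply: sm_mul (sm_cst _ _ _).
Qed.

End Support.

Lemma supp_mul (P Q R : nat -> nat -> bool) p q :
  supp_in P p -> supp_in Q q ->
  (forall k l a b, P k l -> Q a b -> R (k + a)%N (l + b)%N) -> supp_in R (p * q).
Proof.
move=> Hp Hq HR i j /coef2M [k [l [Hk Hl /Hp Pkl /Hq Qij]]].
by have := HR _ _ _ _ Pkl Qij; rewrite !subnKC.
Qed.

Lemma supp_subalg (P : nat -> nat -> bool) G q :
  P 0%N 0%N -> (forall k l a b, P k l -> P a b -> P (k + a)%N (l + b)%N) ->
  (forall g, G g -> supp_in P g) -> subalg_gen G q -> supp_in P q.
Proof.
move=> P00 PD PG; elim=> {q} [c|g /PG //|p q _ Hp _ Hq|p q _ Hp _ Hq].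
- exact: supp_cst.
- exact: supp_add.
- exact: supp_mul Hp Hq PD.
Qed.

(* Exponent patterns: Q[x^2, xy] lives on exps_A1, Q[x, y^2] on exps_A2, and
   A1 /\ A2 is represented by polynomials living on exps_B (even degree,
   excluding xy and y^2). *)
Definition exps_A1 (i j : nat) : bool := ~~ odd (i + j) && (j <= i)%N.
Definition exps_A2 (i j : nat) : bool := ~~ odd j.
Definition exps_B (i j : nat) : bool :=
  [&& ~~ odd (i + j), ~~ ((i == 1)%N && (j == 1)%N) & ~~ ((i == 0)%N && (j == 2)%N)].

Lemma subalg_A1_supp q : subalg_gen (of_seq A1gens) q -> supp_in exps_A1 q.
Proof.
apply: supp_subalg => [//|k l a b|g]; first by rewrite /exps_A1; lia.
rewrite /of_seq !inE => /orP [] /eqP ->.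
- have -> : X ^+ 2 = mono 2 0 by rewrite /mono; ring.
  exact: supp_mono.
- have -> : X * Y = mono 1 1 by rewrite /mono; ring.
  exact: supp_mono.
Qed.

Lemma subalg_A2_supp q : subalg_gen (of_seq A2gens) q -> supp_in exps_A2 q.
Proof.
apply: supp_subalg => [//|k l a b|g]; first by rewrite /exps_A2; lia.
rewrite /of_seq !inE => /orP [] /eqP ->.
- have -> : X = mono 1 0 by rewrite /mono; ring.
  exact: supp_mono.
- have -> : Y ^+ 2 = mono 0 2 by rewrite /mono; ring.
  exact: supp_mono.
Qed.

Lemma fS_homogeneous : supp_in (fun i j => i + j == 3)%N fS.
Proof.
have -> : fS = mono 3 0 + mono 1 2 + mono 0 3 by rewrite /fS /mono; ring.
by do 2?apply: supp_add; apply: supp_mono.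
Qed.

(* <fS> is generated in degree 3, so its elements have no terms of degree < 3. *)
Lemma ideal_fS_deg p : in_ideal fS p -> supp_in (fun i j => 3 <= i + j)%N p.
Proof.
move=> [h ->]; apply: (supp_mul (P := fun _ _ => true) _ fS_homogeneous).
  by [].
by move=> k l a b _ /eqP; lia.
Qed.

(* Key step for A1 /\ A2 <= B: write p = q1 = q2 mod fS with q1 in Q[x^2,xy]
   and q2 in Q[x,y^2].  Since q1 - q2 has no terms of degree < 3, the term xy,
   the only low-degree monomial of Q[x^2,xy] that is not in exps_B, cannot
   occur in q1, because it does not occur in q2. *)
Lemma A12_representative p :
  A12 p -> exists2 q, in_ideal fS (p - q) & supp_in exps_B q.
Proof.
move=> [[q1 [/subalg_A1_supp S1 [h1 E1]]] [q2 [/subalg_A2_supp S2 [h2 E2]]]].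
exists q1; first by exists h1.
have deg_q1q2 : supp_in (fun i j => 3 <= i + j)%N (q1 - q2).
  by apply: ideal_fS_deg; exists (h2 - h1); rewrite mulrBl -E1 -E2; ring.
move=> i j nz1; have := S1 _ _ nz1; rewrite /exps_A1 /exps_B.
have [|low] := leqP 3 (i + j); first lia.
have nz2 : coef2 q2 i j != 0.
  have [/deg_q1q2|] := boolP (coef2 (q1 - q2) i j != 0); first lia.
  by rewrite negbK coef2B subr_eq0 => /eqP <-.
by have := S2 _ _ nz2; rewrite /exps_A2; lia.
Qed.

(* Every exponent in exps_B is a sum of exponents from the finite list
   (2,0), (2,2), (3,1), (0,4), (1,3), (0,6), (1,5).  Hence a subalgebra
   containing these seven monomials contains all monomials on exps_B; this is
   used both in S (for B) and in Q[x,y]/<x^3> (for the initial algebra). *)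
Section ExpsBMonomials.
Variables (f : Rxy) (G : Rxy -> Prop).
Local Notation S := (subalg_mod f G).
Hypotheses (S20 : S (mono 2 0)) (S22 : S (mono 2 2)) (S31 : S (mono 3 1))
  (S04 : S (mono 0 4)) (S13 : S (mono 1 3)) (S06 : S (mono 0 6))
  (S15 : S (mono 1 5)).

Lemma exps_B_monos i j : exps_B i j -> S (mono i j).
Proof.
move Hd : (i + j)%N => d; elim/ltn_ind: d i j Hd => d IH i j Hd Bij; subst d.
have split a b : (a <= i)%N -> (b <= j)%N -> (0 < a + b < i + j)%N ->
    exps_B a b -> exps_B (i - a) (j - b) -> S (mono i j).
  move=> ai bj ab Bab Brest.
  rewrite -(subnKC ai) -(subnKC bj) mono_split.
  by apply: sm_mul; [apply: (IH (a + b)%N) | apply: (IH (i - a + (j - b))%N)];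
    rewrite //; lia.
move: Bij; rewrite /exps_B => Bij.
(* For i >= 2 split off x^2, except for the atoms x^3y and x^2y^2; for i <= 1
   and j >= 7 split off y^4; what remains are the atoms 1, y^4, xy^3, y^6,
   xy^5. *)
have [i2|i1] := leqP 2 i.
  have [d4|d2] := leqP 4 (i + j); last by have [-> ->] : i = 2%N /\ j = 0%N by lia.
  case E31 : ((i == 3) && (j == 1))%N; first by case/andP: E31 => /eqP -> /eqP ->.
  case E22 : ((i == 2) && (j == 2))%N; first by case/andP: E22 => /eqP -> /eqP ->.
  by apply: (split 2 0)%N; move: E31 E22; rewrite /exps_B; lia.
have [j7|j6] := leqP 7 j; first by apply: (split 0 4)%N; rewrite /exps_B; lia.
case: i i1 Bij {IH split} => [|[|//]] _; case: j j6 => [|[|[|[|[|[|[|//]]]]]]] _ //= _.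
by rewrite mono0; exact: sm_cst.
Qed.

End ExpsBMonomials.

Local Notation inB := (subalg_mod fS (of_seq Bgens)).

Lemma B_monos : inB (mono 2 0) /\ inB (mono 2 2) /\ inB (mono 3 1) /\
  inB (mono 0 4) /\ inB (mono 1 3) /\ inB (mono 0 6) /\ inB (mono 1 5).
Proof.
rewrite /Bgens; do !split.
- by rewrite (_ : mono 2 0 = X ^+ 2); [subalg_closure | rewrite /mono; ring].
- (* x^2y^2 = (x^2y^2 + xy^3) - xy^3 *)
  rewrite (_ : mono 2 2 = (X ^+ 2 * Y ^+ 2 + X * Y ^+ 3) - X * Y ^+ 3).
    by subalg_closure.
  by rewrite /mono; ring.
- (* x^3y = y fS - xy^3 - y^4 *)
  apply: (sm_congr (q := - (X * Y ^+ 3) - Y ^+ 4) (h := Y)).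
    by rewrite /mono /fS; ring.
  by subalg_closure.
- by rewrite (_ : mono 0 4 = Y ^+ 4); [subalg_closure | rewrite /mono; ring].
- by rewrite (_ : mono 1 3 = X * Y ^+ 3); [subalg_closure | rewrite /mono; ring].
- by rewrite (_ : mono 0 6 = Y ^+ 6); [subalg_closure | rewrite /mono; ring].
- by rewrite (_ : mono 1 5 = X * Y ^+ 5); [subalg_closure | rewrite /mono; ring].
Qed.

Lemma A12_sub_B p : A12 p -> inB p.
Proof.
move=> /A12_representative [q Ipq Bq]; apply: sm_ideal Ipq.
have [S20 [S22 [S31 [S04 [S13 [S06 S15]]]]]] := B_monos.
exact: sm_supp Bq (exps_B_monos S20 S22 S31 S04 S13 S06 S15).
Qed.

Lemma Bgens_A1 g : g \in Bgens -> A1 g.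
Proof.
rewrite /A1 /A1gens; have Y4 : subalg_mod fS (of_seq [:: X ^+ 2; X * Y]) (Y ^+ 4).
  apply: (sm_congr (q := X ^+ 2 * X ^+ 2 + (X * Y) * (X * Y) - X ^+ 2 * (X * Y))
                   (h := Y - X)); last by subalg_closure.
  by rewrite /fS; ring.
rewrite !inE => /or4P [/eqP ->|/eqP ->|/eqP ->|/or3P [/eqP ->|/eqP ->|/eqP ->]] //.
- by subalg_closure.
- apply: (sm_congr (q := - (X ^+ 2 * X ^+ 2)) (h := X)); last by subalg_closure.
  by rewrite /fS; ring.
- apply: (sm_congr (q := - (X ^+ 2 * X ^+ 2) - (X * Y) * (X * Y)) (h := X)).
    by rewrite /fS; ring.
  by subalg_closure.
- apply: (sm_congr (q := - ((X * Y) * (X * Y) * (X * Y)) + X ^+ 2 * ((X * Y) * (X * Y))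
                          + X ^+ 2 * Y ^+ 4) (h := Y ^+ 3 - X * Y ^+ 2)).
    by rewrite /fS; ring.
  by subalg_closure.
- apply: (sm_congr (q := - (X ^+ 2 * ((X * Y) * (X * Y))) - X ^+ 2 * Y ^+ 4)
                   (h := X * Y ^+ 2)); last by subalg_closure.
  by rewrite /fS; ring.
Qed.

Lemma Bgens_A2 g : g \in Bgens -> A2 g.
Proof.
rewrite /A2 /A2gens !inE.
move=> /or4P [/eqP ->|/eqP ->|/eqP ->|/or3P [/eqP ->|/eqP ->|/eqP ->]].
- by rewrite (_ : X ^+ 2 = X * X); [subalg_closure | ring].
- apply: (sm_congr (q := - (X * X * X * X)) (h := X)); last by subalg_closure.
  by rewrite /fS; ring.
- by rewrite (_ : Y ^+ 4 = Y ^+ 2 * Y ^+ 2); [subalg_closure | ring].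
- apply: (sm_congr (q := - (X * X * X * X) - X * X * Y ^+ 2) (h := X)).
    by rewrite /fS; ring.
  by subalg_closure.
- by rewrite (_ : Y ^+ 6 = Y ^+ 2 * Y ^+ 2 * Y ^+ 2); [subalg_closure | ring].
- apply: (sm_congr (q := - (X * X * X * X * Y ^+ 2) - X * X * Y ^+ 2 * Y ^+ 2)
                   (h := X * Y ^+ 2)); last by subalg_closure.
  by rewrite /fS; ring.
Qed.

Lemma A12_eq_B p : A12 p <-> inB p.
Proof.
split; first exact: A12_sub_B.
by move=> Bp; split; apply: sm_sub Bp => g; [exact: Bgens_A1 | exact: Bgens_A2].
Qed.

Lemma size_fS : size fS = 4%N.
Proof.
rewrite /fS -addrA size_polyDl /X ?size_polyXn // ltnS; apply/leq_sizeP => k Hk.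
rewrite /Y coefD coefXM -!rmorphXn coefC.
by case: k Hk => [|[|k]] Hk //=; rewrite coefC addr0.
Qed.

Lemma size_mono i j : (i < 3)%N -> (size (mono i j) <= 3)%N.
Proof.
move=> i3; rewrite monoE mul_polyC (leq_trans (size_scale_leq _ _)) //.
by rewrite size_polyXn.
Qed.

Lemma size_cstM c p : (size (cst c * p)%R <= size p)%N.
Proof. by rewrite /cst mul_polyC size_scale_leq. Qed.

(* Normal forms are unique: a nonzero multiple of fS has x-degree >= 3. *)
Lemma NF_unique p r1 r2 : is_NF p r1 -> is_NF p r2 -> r1 = r2.
Proof.
move=> [[h1 E1] s1] [[h2 E2] s2]; apply/eqP; rewrite -subr_eq0.
have E : r1 - r2 = (h2 - h1) * fS by rewrite mulrBl -E1 -E2; ring.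
have [h0|hn0] := eqVneq (h2 - h1) 0; first by rewrite E h0 mul0r.
have small : (size (r1 - r2)%R <= 3)%N.
  by rewrite (leq_trans (size_polyD _ _)) // size_polyN geq_max s1 s2.
have fS0 : fS != 0 by rewrite -size_poly_gt0 size_fS.
rewrite E size_mul // size_fS addnS /= in small.
by move: small; rewrite -{2}[3%N]add0n leq_add2r leqn0 size_poly_eq0 (negbTE hn0).
Qed.

(* Reducing a polynomial supported on P to normal form, via the rewriting
   x^3 -> -xy^2 - y^3, keeps the support inside P when P is stable under
   this rewriting. *)
Section NormalFormSupport.
Variable P : nat -> nat -> bool.
Hypothesis P_reduce :
  forall i j, P (i + 3)%N j -> P (i + 1)%N (j + 2)%N && P i (j + 3)%N.

Definition NF_in (p : Rxy) : Prop := exists2 r, is_NF p r & supp_in P r.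

Lemma NF_in_congr p q : in_ideal fS (p - q) -> NF_in q -> NF_in p.
Proof.
move=> Ipq [r [Iqr sr] Pr]; exists r => //; split=> //.
by rewrite (_ : p - r = (p - q) + (q - r)); [exact: idealD | ring].
Qed.

Lemma NF_in0 : NF_in 0.
Proof. by exists 0; [split; [rewrite subrr; exact: ideal0 | rewrite size_poly0] | exact: supp0]. Qed.

Lemma NF_inD p q : NF_in p -> NF_in q -> NF_in (p + q).
Proof.
move=> [r1 [I1 s1] P1] [r2 [I2 s2] P2]; exists (r1 + r2); last exact: supp_add.
split; last by rewrite (leq_trans (size_polyD _ _)) // geq_max s1 s2.
by rewrite (_ : _ - _ = (p - r1) + (q - r2)); [exact: idealD | ring].
Qed.

Lemma NF_inCM c p : NF_in p -> NF_in (cst c * p).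
Proof.
move=> [r [I s] Pr]; exists (cst c * r); last exact: supp_cstM.
by split; [rewrite -mulrBr; exact: idealMl | exact: leq_trans (size_cstM _ _) s].
Qed.

Lemma NF_in_mono i j : P i j -> NF_in (mono i j).
Proof.
elim/ltn_ind: i j => i IH j Pij.
have [i3|] := ltnP i 3.
  exists (mono i j); last exact: supp_mono.
  by split; [rewrite subrr; exact: ideal0 | exact: size_mono].
move=> i3; have [k Ei] : exists k, i = (k + 3)%N by exists (i - 3)%N; rewrite subnK.
subst i; have /andP [P1 P2] := P_reduce Pij.
apply: (NF_in_congr (q := cst (-1) * mono (k + 1) (j + 2) + cst (-1) * mono k (j + 3))).
  by exists (mono k j); rewrite /mono /fS /cst !rmorphN1 !exprD; ring.
by apply: NF_inD; apply: NF_inCM; apply: IH => //; lia.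
Qed.

Lemma NF_in_supp p : supp_in P p -> NF_in p.
Proof.
apply: supp_ind; [exact: NF_in0 | exact: NF_inD |].
by move=> c i j /NF_in_mono; exact: NF_inCM.
Qed.

End NormalFormSupport.

Local Notation init_Bgens := (fun t => exists g, g \in Bgens /\ init_term g t).
Local Notation inInitB := (subalg_mod inI init_Bgens).

Lemma init_term_lead (g s : Rxy) (i j : nat) :
  (i < 3)%N -> (size s <= 3)%N -> g = mono i j + s ->
  supp_in (fun a b => grevlex_le a b i j && ~~ ((a == i) && (b == j)))%N s ->
  init_term g (mono i j).
Proof.
move=> i3 s3 -> below; exists (mono i j + s); split.
  split; first by rewrite subrr; exact: ideal0.
  by rewrite (leq_trans (size_polyD _ _)) // geq_max size_mono.
have sij : coef2 s i j = 0.
  by apply/eqP; apply: contraT => /below; rewrite !eqxx andbF.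
have lead : coef2 (mono i j + s) i j = 1 by rewrite coef2D coef2_mono sij !eqxx addr0.
exists i, j; rewrite lead; split; first exact: oner_neq0.
split; first by rewrite termE /cst !rmorph1 mul1r.
move=> a b; rewrite coef2D coef2_mono.
case: (boolP ((a == i) && (b == j))%N) => [/andP [/eqP -> /eqP ->] _|_].
  by rewrite /grevlex_le; lia.
by rewrite add0r => /below /andP [].
Qed.

Lemma init_gen_mono (g : Rxy) (i j : nat) :
  g \in Bgens -> g = mono i j -> (i < 3)%N -> inInitB (mono i j).
Proof.
move=> gB Eg i3; apply: sm_gen; exists g; split=> //.
apply: (init_term_lead (s := 0)) => //; last exact: supp0.
- by rewrite size_poly0.
- by rewrite addr0.
Qed.

(* Modulo x^3 the initial terms of Bgens contain the seven monomials needed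
   by exps_B_monos: x^3y vanishes, x^2y^2 is the initial term of
   x^2y^2 + xy^3, and the others are generators themselves. *)
Lemma init_monos :
  inInitB (mono 2 0) /\ inInitB (mono 2 2) /\ inInitB (mono 3 1) /\
  inInitB (mono 0 4) /\ inInitB (mono 1 3) /\ inInitB (mono 0 6) /\ inInitB (mono 1 5).
Proof.
do !split.
- by apply: (init_gen_mono (g := X ^+ 2)); rewrite ?inE ?eqxx // /mono; ring.
- apply: sm_gen; exists (X ^+ 2 * Y ^+ 2 + X * Y ^+ 3).
  split; first by rewrite !inE eqxx orbT.
  apply: (init_term_lead (s := mono 1 3)) => //.
  + exact: size_mono.
  + by apply: supp_mono; rewrite /grevlex_le.
- apply: (sm_congr (q := cst 0) (h := Y)); last exact: sm_cst.
  by rewrite /mono /inI /cst !rmorph0; ring.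
- by apply: (init_gen_mono (g := Y ^+ 4)); rewrite ?inE ?eqxx ?orbT // /mono; ring.
- by apply: (init_gen_mono (g := X * Y ^+ 3)); rewrite ?inE ?eqxx ?orbT // /mono; ring.
- by apply: (init_gen_mono (g := Y ^+ 6)); rewrite ?inE ?eqxx ?orbT // /mono; ring.
- by apply: (init_gen_mono (g := X * Y ^+ 5)); rewrite ?inE ?eqxx ?orbT // /mono; ring.
Qed.

Lemma exps_B_reduce i j :
  exps_B (i + 3)%N j -> exps_B (i + 1)%N (j + 2)%N && exps_B i (j + 3)%N.
Proof. by rewrite /exps_B; lia. Qed.

(* Second half: the normal form of an element of A1 /\ A2 is supported on
   exps_B, hence so is its initial term, which therefore lies in the
   algebra generated by the initial terms of Bgens. *)
Lemma init_A12 a t : A12 a -> init_term a t -> inInitB t.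
Proof.
move=> /A12_representative [q Iaq Bq] [r [NFr [i [j [nz [-> _]]]]]].
have [r' NFr' Br'] := NF_in_congr Iaq (NF_in_supp exps_B_reduce Bq).
rewrite (NF_unique NFr NFr') in nz *; rewrite termE.
have [S20 [S22 [S31 [S04 [S13 [S06 S15]]]]]] := init_monos.
exact: sm_mul (sm_cst _ _ _) (exps_B_monos S20 S22 S31 S04 S13 S06 S15 (Br' _ _ nz)).
Qed.

Theorem mainTheorem2 :
  (forall p : Rxy, A12 p <-> subalg_mod fS (of_seq Bgens) p) /\
  subalg_basis A12 Bgens.
Proof.
split; first exact: A12_eq_B.
split; first by move=> g gB; apply/A12_eq_B; exact: sm_gen.
move=> t; split; apply: sm_sub => u [a [Aa Iau]].
- exact: init_A12 Aa Iau.
- by apply: sm_gen; exists a; split=> //; apply/A12_eq_B; exact: sm_gen.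
Qed.
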